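(* For every $n\ge 2$, $\mathrm{isat}(n,\mathcal{V}_2)=\mathrm{isat}(n,\Lambda_2)=n+1$.
   Context: $\mathcal{B}_n$ denotes the Boolean lattice $(2^{[n]},\subseteq)$. A family $\mathcal{F}\subseteq 2^{[n]}$ (ordered by inclusion) is induced-$\mathcal{P}$-saturated if it contains no induced copy of $\mathcal{P}$ (an injection $f$ with $u\le v\iff f(u)\subseteq f(v)$) but every family $\mathcal{F}'$ with $\mathcal{F}\subsetneq\mathcal{F}'\subseteq 2^{[n]}$ contains one. $\mathrm{isat}(n,\mathcal{P})$ is the minimum size of an induced-$\mathcal{P}$-saturated family in $\mathcal{B}_n$. $\mathcal{V}_2$ is the three-element poset with one minimal element below two incomparable maximal elements; $\Lambda_2$ is the three-element poset with one maximal element above two incomparable minimal elements. *)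

From mathcomp Require Import all_boot.
Set Implicit Arguments. Unset Strict Implicit. Unset Printing Implicit Defensive.

(* A finite poset P is given by a carrier finType and its order relation le.
   The Boolean lattice B_n is {set 'I_n} ordered by \subset; a family is
   F : {set {set 'I_n}}. *)

Definition has_induced_copy (P : finType) (le : rel P) (n : nat)
    (F : {set {set 'I_n}}) : Prop :=
  exists f : P -> {set 'I_n},
    [/\ injective f, (forall u, f u \in F) &
        (forall u v, le u v = (f u \subset f v))].

Definition induced_saturated (P : finType) (le : rel P) (n : nat)
    (F : {set {set 'I_n}}) : Prop :=
  ~ has_induced_copy le F /\
  (forall F' : {set {set 'I_n}}, F \proper F' -> has_induced_copy le F').

(* isat n P = k : k is the minimum size of an induced-P-saturated family in B_n. *)
Definition isat_eq (P : finType) (le : rel P) (n k : nat) : Prop :=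
  (exists F : {set {set 'I_n}}, induced_saturated le F /\ #|F| = k) /\
  (forall F : {set {set 'I_n}}, induced_saturated le F -> k <= #|F|).

(* V_2 on 'I_3: 0 is the minimum, 1 and 2 are incomparable maximal elements. *)
Definition V2_le : rel 'I_3 :=
  fun u v => (u == v) || (nat_of_ord u == 0).

(* Lambda_2 on 'I_3: 2 is the maximum, 0 and 1 are incomparable minimal elements. *)
Definition Lambda2_le : rel 'I_3 :=
  fun u v => (u == v) || (nat_of_ord v == 2).

From mathcomp Require Import all_boot.
Set Implicit Arguments. Unset Strict Implicit. Unset Printing Implicit Defensive.

(* A V_2-saturated family F of subsets of T contains T itself and, for every
   point i, a member c not containing i with i |: c also in F.  To find c,
   take B in F of least size such that i \in B and some A in F lies in B :\ i
   (B = T qualifies); if B :\ i were not in F, adding it would create a V_2,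
   and every way it could do so gives either a V_2 inside F or a smaller B.
   Distinct points give distinct c, since c, i |: c, j |: c would form a V_2,
   so #|F| >= #|T| + 1.  A maximal chain attains the bound: it is V_2-free,
   and a new set X is incomparable with the chain member of size #|X|, both
   lying above the empty set.  Complementation exchanges V_2 and Lambda_2. *)

Definition saturated (U : finType) (P : {set U} -> Prop) (F : {set U}) :=
  ~ P F /\ forall G : {set U}, F \proper G -> P G.

Lemma saturated_iff (U : finType) (P Q : {set U} -> Prop) (F : {set U}) :
  (forall G, P G <-> Q G) -> saturated P F <-> saturated Q F.
Proof.
move=> PQ; split=> -[free maxl]; split=> [/PQ // | G /maxl /PQ //].
Qed.

Lemma has_induced_copy_antisym (P : finType) (le : rel P) n
    (F : {set {set 'I_n}}) :
  antisymmetric le ->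
  has_induced_copy le F <->
  exists f : P -> {set 'I_n},
    (forall u, f u \in F) /\ (forall u v, le u v = (f u \subset f v)).
Proof.
move=> anti; split=> [[f [_ fF fle]] | [f [fF fle]]]; exists f => //.
by split=> // u v fuv; apply: anti; rewrite !fle fuv subxx.
Qed.

Section Families.
Variable T : finType.
Implicit Types (A B X : {set T}) (F G : {set {set T}}).

Definition incomparable A B := ~~ (A \subset B) && ~~ (B \subset A).

Definition has_V2 F := exists a b c,
  [/\ a \in F, b \in F, c \in F & [/\ a \subset b, a \subset c & incomparable b c]].

Definition has_Lambda2 F := exists a b c,
  [/\ a \in F, b \in F, c \in F & [/\ a \subset c, b \subset c & incomparable a b]].

Lemma incomparable_sym A B : incomparable A B = incomparable B A.
Proof. by rewrite /incomparable andbC. Qed.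

Lemma incomparable_setC A B : incomparable (~: A) (~: B) = incomparable A B.
Proof. by rewrite /incomparable !setCS andbC. Qed.

Lemma incomparable_eq_card A B : #|A| = #|B| -> A != B -> incomparable A B.
Proof.
move=> AB neqAB; apply/andP; split; apply: contra neqAB => sub.
- by rewrite eqEcard sub AB /=.
- by rewrite eq_sym eqEcard sub AB /=.
Qed.

Lemma incomparable_setU1 i j A :
  i != j -> i \notin A -> j \notin A -> incomparable (i |: A) (j |: A).
Proof.
have notsub k l : k != l -> k \notin A -> ~~ (k |: A \subset l |: A).
  move=> kl kA; apply/negP => /subsetP/(_ k (setU11 k A)).
  by rewrite in_setU1 (negbTE kl) (negbTE kA).
by move=> ij iA jA; rewrite /incomparable !notsub // eq_sym.
Qed.

Lemma incomparable_supsetC1 i A B :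
  [set~ i] \subset A -> [set~ i] \subset B -> incomparable A B = false.
Proof.
move=> iA iB; apply/negbTE; rewrite negb_and !negbK.
have [iinA | inotA] := boolP (i \in A).
  apply/orP; right; apply/subsetP => j _.
  by have [-> // | ji] := eqVneq j i; apply: (subsetP iA); rewrite in_setC1.
apply/orP; left; apply: subset_trans iB; apply/subsetP => j jA.
by rewrite in_setC1; apply: contraNneq inotA => <-.
Qed.

Definition complements F := [set ~: A | A in F].

Lemma mem_complements F A : (A \in complements F) = (~: A \in F).
Proof. by rewrite -{1}[A]setCK mem_imset //; apply: setC_inj. Qed.

Lemma complementsK : involutive complements.
Proof. by move=> F; apply/setP => A; rewrite !mem_complements setCK. Qed.

Lemma card_complements F : #|complements F| = #|F|.
Proof. by rewrite card_imset //; apply: setC_inj. Qed.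

Lemma proper_complements F G :
  (complements F \proper complements G) = (F \proper G).
Proof.
have imset_proper_complements F1 G1 :
    F1 \proper G1 -> complements F1 \proper complements G1.
  by apply: imset_proper; apply: in2W; apply: setC_inj.
apply/idP/idP; last exact: imset_proper_complements.
by move/imset_proper_complements; rewrite !complementsK.
Qed.

Lemma has_Lambda2_complements F : has_Lambda2 F <-> has_V2 (complements F).
Proof.
split=> [[a [b [c [aF bF cF [ac bc ab]]]]] | [a [b [c [aF bF cF [ab ac bc]]]]]].
  exists (~: c), (~: a), (~: b).
  by rewrite !mem_complements !setCK !setCS incomparable_setC.
rewrite !mem_complements in aF bF cF; exists (~: b), (~: c), (~: a).
by rewrite !setCS incomparable_setC.
Qed.

Lemma saturated_Lambda2_complements F :
  saturated has_Lambda2 F <-> saturated has_V2 (complements F).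
Proof.
split=> -[free maxl]; split=> [/has_Lambda2_complements // | G].
- rewrite -[G]complementsK proper_complements.
  by move=> /maxl /has_Lambda2_complements.
- by rewrite -proper_complements => /maxl /has_Lambda2_complements.
Qed.

Section V2Saturated.
Variable F : {set {set T}}.
Hypothesis satF : saturated has_V2 F.

Lemma V2_saturated_comparable a b c :
  a \in F -> b \in F -> c \in F -> a \subset b -> a \subset c ->
  incomparable b c = false.
Proof.
move=> aF bF cF ab ac; apply/negP => bc.
by apply: satF.1; exists a, b, c.
Qed.

Lemma V2_saturated_extend X : X \notin F ->
  (exists b c, [/\ b \in F, c \in F, X \subset b, X \subset c & incomparable b c])
  \/ (exists a c, [/\ a \in F, c \in F, a \subset X, a \subset c & incomparable X c]).
Proof.
move=> XnF; have properXF : F \proper X |: F.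
  by rewrite properE subsetUr; apply: contra XnF => /subsetP; apply; apply: setU11.
have [a [b [c [aF bF cF [ab ac bc]]]]] := satF.2 _ properXF.
move: aF bF cF ab ac bc; rewrite !in_setU1.
have [-> _ | _ /= aF] := eqVneq a X.
  have [-> _ | _ /= bF] := eqVneq b X.
    by move=> _ _ Xc; rewrite /incomparable Xc.
  have [-> _ | _ /= cF] := eqVneq c X.
    by move=> Xb _; rewrite /incomparable Xb andbF.
  by move=> Xb Xc bc; left; exists b, c.
have [-> _ | _ /= bF] := eqVneq b X.
  have [-> _ | _ /= cF] := eqVneq c X.
    by move=> _ _; rewrite /incomparable subxx.
  by move=> aX ac Xc; right; exists a, c.
have [-> _ | _ /= cF] := eqVneq c X.
  by move=> ab aX bX; right; exists a, b; rewrite incomparable_sym.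
move=> ab ac bc.
by rewrite (V2_saturated_comparable aF bF cF ab ac) in bc.
Qed.

Lemma setT_in_V2_saturated : setT \in F.
Proof.
apply/contraT => TnF.
have [[b [c [_ _ Tb Tc]]] | [a [c [_ _ _ _]]]] := V2_saturated_extend TnF.
  by move: Tb Tc; rewrite !subTset => /eqP-> /eqP->; rewrite /incomparable subxx.
by rewrite /incomparable subsetT andbF.
Qed.

Lemma V2_saturated_avoid i : exists2 A, A \in F & i \notin A.
Proof.
have [iF | inF] := boolP ([set~ i] \in F); first by exists [set~ i]; rewrite ?setC11.
have [[b [c [_ _ ib ic]]] | [a [c [aF _ ai _ _]]]] := V2_saturated_extend inF.
  by rewrite (incomparable_supsetC1 ib ic).
by exists a => //; apply: contraTN ai => ia; apply/subsetPn; exists i; rewrite ?setC11.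
Qed.

Lemma V2_saturated_cover i : exists c, [/\ c \in F, i \notin c & i |: c \in F].
Proof.
pose P B := [&& B \in F, i \in B & [exists A in F, A \subset B :\ i]].
have PT : P setT.
  have [A AF iA] := V2_saturated_avoid i.
  rewrite /P setT_in_V2_saturated inE /=; apply/exists_inP; exists A => //.
  by rewrite subsetD1 subsetT.
case: (arg_minnP (fun B => #|B|) PT) => B /and3P [BF iB /exists_inP [A AF AX]] minB.
have [XF | XnF] := boolP (B :\ i \in F).
  by exists (B :\ i); rewrite setD11 setD1K.
have XB : B :\ i \subset B := subD1set B i.
have [[b [c [bF cF Xb Xc]]] | [a [c [aF cF aX ac /andP [Xc cX]]]]] :=
  V2_saturated_extend XnF.
  by rewrite (V2_saturated_comparable AF bF cF (subset_trans AX Xb) (subset_trans AX Xc)).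
have aB := subset_trans aX XB.
have cB : c \subset B.
  apply/contraT => cB; have Bc : ~~ (B \subset c).
    by apply: contra Xc; apply: subset_trans.
  by rewrite -(V2_saturated_comparable aF BF cF aB ac) /incomparable Bc cB.
have ic : i \in c by apply: contraNT cX => ic; rewrite subsetD1 cB.
have ia : i \notin a by move: aX; rewrite subsetD1 => /andP [].
have : P c by rewrite /P cF ic; apply/exists_inP; exists a; rewrite // subsetD1 ac.
move=> /minB; rewrite leqNgt proper_card // properEneq cB andbT.
by apply: contraNneq Xc => ->.
Qed.

Lemma V2_saturated_card : #|T|.+1 <= #|F|.
Proof.
have [g gP] := fin_all_exists V2_saturated_cover.
have g_inj : injective g.
  move=> i j gij; apply/eqP/contraT => ij.
  have [giF igi iF] := gP i; have [_ jgj jF] := gP j; rewrite -gij in jgj jF.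
  rewrite -(V2_saturated_comparable giF iF jF (subsetUr _ _) (subsetUr _ _)).
  exact: incomparable_setU1.
have TnG : setT \notin [set g i | i : T].
  by apply/imsetP => -[i _ giT]; have [_ + _] := gP i; rewrite -giT inE.
have sub : setT |: [set g i | i : T] \subset F.
  apply/subsetP => A /setU1P [-> | /imsetP [i _ ->]]; first exact: setT_in_V2_saturated.
  by have [] := gP i.
by apply: leq_trans (subset_leq_card sub); rewrite cardsU1 TnG card_imset.
Qed.

End V2Saturated.

Definition enum_prefix k : {set T} := [set x in take k (enum T)].

Definition prefix_chain : {set {set T}} := [set enum_prefix k | k : 'I_#|T|.+1].

Lemma card_enum_prefix k : k <= #|T| -> #|enum_prefix k| = k.
Proof.
move=> kT; rewrite cardsE (card_uniqP _) ?take_uniq ?enum_uniq //.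
by rewrite size_takel // -cardT.
Qed.

Lemma enum_prefix_mono k l : k <= l -> enum_prefix k \subset enum_prefix l.
Proof.
move=> kl; apply/subsetP => x; rewrite !inE -(take_takel _ kl).
exact: mem_take.
Qed.

Lemma card_prefix_chain : #|prefix_chain| = #|T|.+1.
Proof.
rewrite card_imset ?card_ord // => k l kl; apply: ord_inj.
by rewrite -(card_enum_prefix (ltnSE (ltn_ord k))) kl card_enum_prefix // -ltnS.
Qed.

Lemma prefix_chain_saturated : saturated has_V2 prefix_chain.
Proof.
split.
  move=> [_ [b [c [_ /imsetP [k _ ->] /imsetP [l _ ->] [_ _]]]]].
  rewrite /incomparable; case: (leqP k l) => [kl | /ltnW lk].
    by rewrite enum_prefix_mono.
  by rewrite (enum_prefix_mono lk) andbF.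
move=> G /properP [chainG [X XG XnC]].
have XT : #|X| < #|T|.+1 by rewrite ltnS max_card.
have CG k : enum_prefix k \in prefix_chain -> enum_prefix k \in G.
  by move/(subsetP chainG).
have CX : enum_prefix #|X| \in prefix_chain by apply/imsetP; exists (Ordinal XT).
have C0 : enum_prefix 0 \in prefix_chain by apply/imsetP; exists ord0.
exists (enum_prefix 0), X, (enum_prefix #|X|); split; rewrite ?CG //.
split; rewrite ?enum_prefix_mono //.
  by apply/subsetP => x; rewrite inE take0.
apply: incomparable_eq_card; first by rewrite card_enum_prefix ?max_card.
by apply: contraNneq XnC => ->.
Qed.

End Families.

Lemma V2_le_antisym : antisymmetric V2_le.
Proof. by do 2![case=> [[|[|[|?]]] ?]] => //= _; apply: ord_inj. Qed.

Lemma Lambda2_le_antisym : antisymmetric Lambda2_le.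
Proof. by do 2![case=> [[|[|[|?]]] ?]] => //= _; apply: ord_inj. Qed.

Lemma has_induced_V2 n (F : {set {set 'I_n}}) :
  has_induced_copy V2_le F <-> has_V2 F.
Proof.
apply: iff_trans (has_induced_copy_antisym F V2_le_antisym) _.
split=> [[f [fF fle]] | [a [b [c [aF bF cF [ab ac bc]]]]]].
  exists (f ord0), (f (Ordinal (isT : 1 < 3))), (f ord_max).
  by rewrite !fF /incomparable -!fle.
move: bc; rewrite /incomparable => /andP [/negbTE bc /negbTE cb].
have ba : (b \subset a) = false by apply: contraFF bc => /subset_trans; apply.
have ca : (c \subset a) = false by apply: contraFF cb => /subset_trans; apply.
exists (fun u : 'I_3 => nth a [:: a; b; c] u); split; first by case=> [[|[|[|?]]] ?].
by do 2![case=> [[|[|[|?]]] ?]] => //=; rewrite ?subxx.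
Qed.

Lemma has_induced_Lambda2 n (F : {set {set 'I_n}}) :
  has_induced_copy Lambda2_le F <-> has_Lambda2 F.
Proof.
apply: iff_trans (has_induced_copy_antisym F Lambda2_le_antisym) _.
split=> [[f [fF fle]] | [a [b [c [aF bF cF [ac bc ab]]]]]].
  exists (f ord0), (f (Ordinal (isT : 1 < 3))), (f ord_max).
  by rewrite !fF /incomparable -!fle.
move: ab; rewrite /incomparable => /andP [/negbTE ab /negbTE ba].
have ca : (c \subset a) = false by apply: contraFF ba => /(subset_trans bc).
have cb : (c \subset b) = false by apply: contraFF ab => /(subset_trans ac).
exists (fun u : 'I_3 => nth a [:: a; b; c] u); split; first by case=> [[|[|[|?]]] ?].
by do 2![case=> [[|[|[|?]]] ?]] => //=; rewrite ?subxx.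
Qed.

Theorem theorem1p4 (n : nat) (hn : 2 <= n) :
  isat_eq V2_le n n.+1 /\ isat_eq Lambda2_le n n.+1.
Proof.
have satV (F : {set {set 'I_n}}) :
    induced_saturated V2_le F <-> saturated (@has_V2 _) F.
  exact: saturated_iff (@has_induced_V2 n).
have satL (F : {set {set 'I_n}}) :
    induced_saturated Lambda2_le F <-> saturated (@has_Lambda2 _) F.
  exact: saturated_iff (@has_induced_Lambda2 n).
have cardI : #|'I_n|.+1 = n.+1 by rewrite card_ord.
split; split.
- exists (prefix_chain 'I_n); split; last by rewrite card_prefix_chain.
  exact/satV/prefix_chain_saturated.
- by move=> F /satV /V2_saturated_card; rewrite cardI.
- exists (complements (prefix_chain 'I_n)); split.
    apply/satL/saturated_Lambda2_complements; rewrite complementsK.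
    exact: prefix_chain_saturated.
  by rewrite card_complements card_prefix_chain.
- move=> F /satL /saturated_Lambda2_complements /V2_saturated_card.
  by rewrite card_complements cardI.
Qed.
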